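(* Let $0=p_0<p_1<\cdots<p_M<p_{M+1}=1$, fix a labelled sample $\{(\bm x_j,y_j)\}_{j=1}^N$, and let $c^*$ be a risk model whose $\mathrm{AUNBC}$ is maximal among all risk models on this sample. Then there exist a risk model $c'$ (possibly $c'=c^*$) with $\mathrm{AUNBC}(c')=\mathrm{AUNBC}(c^* )$ and real numbers $q_0,\dots,q_M$ with $q_i\in G_i$ for every $i$, such that $q_iN_i(c')=O_i(c')$ for all $i=0,1,\dots,M$.
   Context: A risk model is any function $c$ assigning to each sample a value $c(\bm x_j)\in[0,1]$. For $i=0,\dots,M$, $\mathrm{TP}_i(c)=\#\{j:c(\bm x_j)\ge p_i,\ y_j=1\}$, $\mathrm{FP}_i(c)=\#\{j:c(\bm x_j)\ge p_i,\ y_j=0\}$, with $\mathrm{TP}_{M+1}=\mathrm{FP}_{M+1}=0$, and $\mathrm{AUNBC}(c)=\frac1N\sum_{i=0}^M(p_{i+1}-p_i)\big(\mathrm{TP}_i(c)-\mathrm{FP}_i(c)\frac{p_i}{1-p_i}\big)$. The risk groups are $G_i=[p_i,p_{i+1})$ for $i=0,\dots,M-1$ and $G_M=[p_M,1]$; $N_i(c)$ is the number of samples with $c(\bm x_j)\in G_i$ and $O_i(c)$ the number of positive samples with $c(\bm x_j)\in G_i$. *)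

From HB Require Import structures.
From mathcomp Require Import all_boot all_order all_algebra.
From mathcomp Require Import reals.
Set Implicit Arguments. Unset Strict Implicit. Unset Printing Implicit Defensive.
Import Order.TTheory GRing.Theory Num.Theory.
Local Open Scope ring_scope.

(* Thresholds p : nat -> R (only p 0, ..., p (M+1) matter).
   Sample: features x : 'I_N -> X, labels y : 'I_N -> bool (true = positive).
   A risk model is any c : X -> R with values in [0,1]. *)

Definition risk_model (R : realType) (X : Type) (c : X -> R) : Prop :=
  forall z, 0 <= c z <= 1.

Definition TP (R : realType) (X : Type) (N : nat) (x : 'I_N -> X)
  (y : 'I_N -> bool) (p : nat -> R) (c : X -> R) (i : nat) : nat :=
  #|[set j : 'I_N | (p i <= c (x j)) && y j]|.

Definition FP (R : realType) (X : Type) (N : nat) (x : 'I_N -> X)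
  (y : 'I_N -> bool) (p : nat -> R) (c : X -> R) (i : nat) : nat :=
  #|[set j : 'I_N | (p i <= c (x j)) && ~~ y j]|.

Definition AUNBC (R : realType) (X : Type) (N : nat) (x : 'I_N -> X)
  (y : 'I_N -> bool) (M : nat) (p : nat -> R) (c : X -> R) : R :=
  N%:R^-1 * \sum_(i < M.+1)
    (p i.+1 - p i) * ((TP x y p c i)%:R - (FP x y p c i)%:R * (p i / (1 - p i))).

Definition in_group (R : realType) (M : nat) (p : nat -> R) (i : nat) (r : R)
  : bool :=
  if (i < M)%N then (p i <= r) && (r < p i.+1) else (p M <= r) && (r <= 1).

Definition Ngroup (R : realType) (X : Type) (N : nat) (x : 'I_N -> X)
  (M : nat) (p : nat -> R) (c : X -> R) (i : nat) : nat :=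
  #|[set j : 'I_N | in_group M p i (c (x j))]|.

Definition Ogroup (R : realType) (X : Type) (N : nat) (x : 'I_N -> X)
  (y : 'I_N -> bool) (M : nat) (p : nat -> R) (c : X -> R) (i : nat) : nat :=
  #|[set j : 'I_N | in_group M p i (c (x j)) && y j]|.

(* The empirical risk e(v), the fraction of positives among the samples with
   features v, maximises AUNBC.  Each threshold term is a sum over samples of
   [p_i <= c(x_j)] (y_j - p_i)/(1 - p_i); since the indicator depends on x_j
   only, y_j may be replaced by its average e(x_j) over the samples sharing
   x_j, and then [p_i <= e(x_j)] is the best indicator class by class.  So e
   attains the maximal AUNBC, that of c*.  The same averaging shows that e is
   calibrated: O_i is the sum of e(x_j) over group i, so q_i = O_i/N_i is a
   mean of values in G_i (for an empty group, take q_i = p_i). *)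

From HB Require Import structures.
From mathcomp Require Import all_boot all_order all_algebra.
From mathcomp Require Import reals boolp.
From mathcomp Require Import ring lra.
Set Implicit Arguments.
Unset Strict Implicit.
Unset Printing Implicit Defensive.
Import Order.TTheory GRing.Theory Num.Theory.
Local Open Scope ring_scope.

Section Mean.
Variables (R : realType) (N : nat).
Implicit Types (A : {set 'I_N}) (f : 'I_N -> R).

(* [mean set0 f = 0], since [0^-1 = 0]. *)
Definition mean A f : R := (\sum_(j in A) f j) / #|A|%:R.

Lemma mean_ge A f lo :
  A != set0 -> (forall j, j \in A -> lo <= f j) -> lo <= mean A f.
Proof.
move=> A0 hf; rewrite /mean ler_pdivlMr ?ltr0n ?card_gt0 //.
by rewrite mulr_natr -sumr_const; apply: ler_sum.
Qed.

Lemma mean_le A f hi :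
  A != set0 -> (forall j, j \in A -> f j <= hi) -> mean A f <= hi.
Proof.
move=> A0 hf; rewrite /mean ler_pdivrMr ?ltr0n ?card_gt0 //.
by rewrite mulr_natr -sumr_const; apply: ler_sum.
Qed.

Lemma mean_lt A f hi :
  A != set0 -> (forall j, j \in A -> f j < hi) -> mean A f < hi.
Proof.
move=> A0 hf; rewrite /mean ltr_pdivrMr ?ltr0n ?card_gt0 //.
rewrite mulr_natr -sumr_const; apply: ltr_sum => //.
by case/set0Pn: A0 => j jA; apply/hasP; exists j; rewrite ?mem_index_enum.
Qed.

Lemma mean_affine A f a b :
  A != set0 -> mean A (fun j => (f j - a) / b) = (mean A f - a) / b.
Proof.
move=> A0; rewrite /mean -mulr_suml sumrB sumr_const -mulr_natr.
have nA : #|A|%:R != 0 :> R by rewrite pnatr_eq0 -lt0n card_gt0.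
by set d := b^-1; field.
Qed.

Lemma mean_mulr_card A f : mean A f * #|A|%:R = \sum_(j in A) f j.
Proof.
have [->|A0] := eqVneq A set0; last by rewrite divfK // pnatr_eq0 -lt0n card_gt0.
by rewrite cards0 mulr0 big_set0.
Qed.

End Mean.

Lemma natr_card_set (R : realType) (N : nat) (b : 'I_N -> bool) :
  #|[set j | b j]|%:R = \sum_j (b j)%:R :> R.
Proof.
rewrite -sum1_card natr_sum big_mkcond; apply: eq_bigr => j _.
by rewrite inE; case: (b j).
Qed.

Lemma indicator_mul_le (R : realType) (b : bool) (m : R) :
  b%:R * m <= (0 <= m)%R%:R * m.
Proof. by case: b; case: (lerP 0 m) => hm /=; lra. Qed.

Section Classes.
Variables (R : realType) (X : Type) (N : nat) (x : 'I_N -> X).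

Definition class (v : X) : {set 'I_N} := [set k | `[< x k = v >]].

Lemma mem_class k v : (k \in class v) = `[< x k = v >].
Proof. by rewrite inE. Qed.

Lemma class_self j : j \in class (x j).
Proof. by rewrite mem_class; apply/asboolP. Qed.

Lemma class_neq0 j : class (x j) != set0.
Proof. by apply/set0Pn; exists j; apply: class_self. Qed.

Lemma mem_classE j k : (k \in class (x j)) = (j \in class (x k)).
Proof. by rewrite !mem_class; apply/asboolP/asboolP. Qed.

Lemma class_eq j k : k \in class (x j) -> class (x k) = class (x j).
Proof. by rewrite mem_class => /asboolP ->. Qed.

Lemma sum_mul_class_mean (G : X -> R) (h : 'I_N -> R) :
  \sum_j G (x j) * h j = \sum_j G (x j) * mean (class (x j)) h.
Proof.
symmetry.
transitivity (\sum_j \sum_(k in class (x j)) G (x k) * h k / #|class (x k)|%:R).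
  apply: eq_bigr => j _; rewrite /mean mulrA mulr_sumr mulr_suml.
  by apply: eq_bigr => k kj; rewrite (class_eq kj); move: kj; rewrite mem_class => /asboolP ->.
rewrite (exchange_big_dep predT) //=; apply: eq_bigr => k _.
under eq_bigl do rewrite mem_classE.
rewrite sumr_const -[_ *+ _]mulr_natr divfK // pnatr_eq0 -lt0n card_gt0.
exact: class_neq0.
Qed.

Variable y : 'I_N -> bool.

Definition empirical_risk (v : X) : R := mean (class v) (fun k => (y k)%:R).

Lemma empirical_risk_model : risk_model empirical_risk.
Proof.
move=> v; rewrite /empirical_risk.
have [->|A0] := eqVneq (class v) set0.
  by rewrite /mean cards0 invr0 mulr0 lexx ler01.
by apply/andP; split; [apply: mean_ge | apply: mean_le] => // k _; case: (y k).
Qed.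

Lemma empirical_risk_calibrated (Q : pred R) :
  #|[set j | Q (empirical_risk (x j)) && y j]|%:R
  = \sum_(j in [set j | Q (empirical_risk (x j))]) empirical_risk (x j).
Proof.
rewrite natr_card_set.
transitivity (\sum_j (Q (empirical_risk (x j)))%:R * (y j)%:R :> R).
  by apply: eq_bigr => j _; rewrite -natrM mulnb.
rewrite (sum_mul_class_mean (fun v => (Q (empirical_risk v))%:R)).
rewrite [RHS]big_mkcond; apply: eq_bigr => j _.
by rewrite inE; case: (Q (empirical_risk (x j))); [exact: mul1r | exact: mul0r].
Qed.

(* [y - (1 - y) P/(1 - P) = (y - P)/(1 - P)] is the contribution of a sample
   to the net benefit at threshold [P]. *)
Definition threshold_gain (P : R) (c : X -> R) : R :=
  \sum_j (P <= c (x j))%R%:R * (((y j)%:R - P) / (1 - P)).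

Lemma threshold_gain_le_empirical (P : R) (c : X -> R) :
  P < 1 -> threshold_gain P c <= threshold_gain P empirical_risk.
Proof.
move=> P1; rewrite /threshold_gain.
rewrite (sum_mul_class_mean (fun v => (P <= c v)%R%:R)).
rewrite (sum_mul_class_mean (fun v => (P <= empirical_risk v)%R%:R)).
apply: ler_sum => j _; rewrite mean_affine ?class_neq0 // -/(empirical_risk _).
have -> : (P <= empirical_risk (x j)) = (0 <= (empirical_risk (x j) - P) / (1 - P)).
  by rewrite pmulr_lge0 ?invr_gt0 ?subr_gt0 // subr_ge0.
exact: indicator_mul_le.
Qed.

Variables (M : nat) (p : nat -> R).

Lemma TP_sub_FP (c : X -> R) (i : nat) :
  p i != 1 ->
  (TP x y p c i)%:R - (FP x y p c i)%:R * (p i / (1 - p i)) = threshold_gain (p i) c.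
Proof.
move=> pi1; have d0 : 1 - p i != 0 by rewrite subr_eq0 eq_sym.
rewrite /TP /FP !natr_card_set mulr_suml -sumrB; apply: eq_bigr => j _.
by case: (p i <= _)%R; case: (y j) => /=; field.
Qed.

Lemma AUNBC_le_empirical (c : X -> R) :
  (forall i, (i <= M)%N -> p i < 1 /\ p i <= p i.+1) ->
  AUNBC x y M p c <= AUNBC x y M p empirical_risk.
Proof.
move=> hp; rewrite /AUNBC ler_wpM2l ?invr_ge0 ?ler0n //.
apply: ler_sum => i _; have [pi1 pi_le] := hp i (ltn_ord i).
rewrite !TP_sub_FP ?lt_eqF // ler_wpM2l ?subr_ge0 //.
exact: threshold_gain_le_empirical.
Qed.

End Classes.

Section Groups.
Variables (R : realType) (M : nat) (p : nat -> R).
Hypotheses (hp1 : p M.+1 = 1) (hpinc : forall i, (i <= M)%N -> p i < p i.+1).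

Lemma thresholds_lt1 i : (i <= M)%N -> p i < 1.
Proof.
move=> iM; rewrite -hp1.
suff lt_shift k : (i + k <= M)%N -> p i < p (i + k).+1.
  by have := lt_shift (M - i)%N; rewrite subnKC //; apply.
elim: k => [|k IHk] ik; first by rewrite addn0 hpinc // -(addn0 i).
rewrite addnS in ik *; apply: lt_trans (IHk (ltnW ik)) (hpinc ik).
Qed.

Lemma in_group_threshold i : (i <= M)%N -> in_group M p i (p i).
Proof.
move=> iM; rewrite /in_group lexx /=; case: (ltnP i M) => [/ltnW /hpinc // | Mi].
have -> : i = M by apply/eqP; rewrite eqn_leq iM Mi.
by rewrite lexx (ltW (thresholds_lt1 _)).
Qed.

Lemma in_group_mean (N : nat) i (A : {set 'I_N}) (f : 'I_N -> R) :
  A != set0 -> (forall j, j \in A -> in_group M p i (f j)) ->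
  in_group M p i (mean A f).
Proof.
rewrite /in_group => A0; case: (i < M)%N => hf; apply/andP.
  by split; [apply: mean_ge | apply: mean_lt] => // j /hf /andP[].
by split; [apply: mean_ge | apply: mean_le] => // j /hf /andP[].
Qed.

End Groups.

Theorem corollary2 (R : realType) (X : Type) (N : nat)
  (x : 'I_N -> X) (y : 'I_N -> bool) (M : nat) (p : nat -> R)
  (hp0 : p 0%N = 0) (hp1 : p M.+1 = 1)
  (hpinc : forall i : nat, (i <= M)%N -> p i < p i.+1)
  (cstar : X -> R) (hcstar : risk_model cstar)
  (hmax : forall c : X -> R, risk_model c -> AUNBC x y M p c <= AUNBC x y M p cstar) :
  exists (c' : X -> R) (q : nat -> R),
    [/\ risk_model c',
        AUNBC x y M p c' = AUNBC x y M p cstar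
      & forall i : nat, (i <= M)%N ->
          in_group M p i (q i) /\
          q i * (Ngroup x M p c' i)%:R = (Ogroup x y M p c' i)%:R].
Proof.
set c' := empirical_risk R x y.
have c'_model : risk_model c' := empirical_risk_model R x y.
have c'_opt : AUNBC x y M p cstar <= AUNBC x y M p c'.
  apply: AUNBC_le_empirical => i iM.
  by rewrite (thresholds_lt1 hp1 hpinc iM) ltW // hpinc.
pose G i := [set j | in_group M p i (c' (x j))].
exists c', (fun i => if G i == set0 then p i else mean (G i) (fun j => c' (x j))).
split => //; first by apply/le_anti; rewrite c'_opt hmax.
move=> i iM; rewrite /Ogroup empirical_risk_calibrated -/(G i).
case: eqP => [G0|/eqP G0]; last first.
  split; last exact: mean_mulr_card.
  by apply: in_group_mean => // j; rewrite inE.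
rewrite G0 big_set0 /Ngroup -/(G i) G0 cards0 mulr0.
by split => //; apply: in_group_threshold.
Qed.
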